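(* Let $\eta$ be a generalized strategy in the game $\Gamma(F,G)$. Then there exists a cutoff strategy $\tilde\eta$ such that either $\eta$ is equivalent to $\tilde\eta$, or $\eta$ is strictly dominated by $\tilde\eta$, i.e., $\pi(\eta,\eta')<\pi(\tilde\eta,\eta')$ for every generalized strategy $\eta'$ of the opponent.
   Context: Game $\Gamma(F,G)$ without communication: player 1's type $u$ is drawn from a distribution on $[0,1]$ with continuous (atomless) CDF $F$ and density $f$; player 2's type independently from a CDF $G$ on $[0,1]$. Each chooses $L$ or $R$; a player of type $u$ gets $1-u$ if both choose $L$, $u$ if both choose $R$, and $0$ otherwise. A generalized strategy of player 1 is a measurable $\eta:[0,1]\to\Delta(\{L,R\})$, with $\eta_u(L)$ the probability type $u$ plays $L$; a generalized strategy $\eta'$ of player 2 is defined likewise on her types. $\pi(\eta,\eta')$ is player 1's ex-ante expected payoff (type $u\sim F$, opponent type $\sim G$). $\eta$ and $\tilde\eta$ are equivalent if $\int_0^1 f(u)\mathbf 1\{\eta(u)\ne\tilde\eta(u)\}du=0$. A cutoff strategy is one for which there is $x\in[0,1]$ with $\eta(u)=L$ for all $u<x$ and $\eta(u)=R$ for all $u>x$. *)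

From HB Require Import structures.
From mathcomp Require Import all_boot all_order all_algebra.
From mathcomp Require Import all_classical all_reals all_analysis.
Set Implicit Arguments. Unset Strict Implicit. Unset Printing Implicit Defensive.
Import Order.TTheory GRing.Theory Num.Theory.
Local Open Scope classical_set_scope.
Local Open Scope ring_scope.

(* A mixed action in Delta({L,R}) is represented by its probability of L,
   a number in [0,1].  A generalized strategy is a measurable map
   eta : [0,1] -> [0,1], u |-> eta_u(L) (values outside [0,1] irrelevant). *)
Definition gen_strategy {R : realType} (eta : R -> R) : Prop :=
  measurable_fun `[0%R : R, 1%R]%classic eta /\
  (forall u, u \in `[0%R : R, 1%R] -> 0 <= eta u <= 1).

(* Player 1's ex-ante expected payoff: type u has density f on [0,1],
   opponent type v ~ G (a probability measure concentrated on [0,1]);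
   given types (u,v) and independent mixing, the payoff is
   eta_u(L) eta'_v(L) (1-u) + eta_u(R) eta'_v(R) u. *)
Definition payoff {R : realType} (f : R -> R)
    (G : {measure set R -> \bar R}) (eta eta' : R -> R) : \bar R :=
  (\int[lebesgue_measure]_(u in `[0%R : R, 1%R]%classic)
     ((f u)%:E *
      \int[G]_(v in `[0%R : R, 1%R]%classic)
        (eta u * eta' v * (1 - u) + (1 - eta u) * (1 - eta' v) * u)%:E))%E.

Definition strat_equiv {R : realType} (f : R -> R) (eta eta' : R -> R) : Prop :=
  (\int[lebesgue_measure]_(u in `[0%R : R, 1%R]%classic)
     (f u * (if `[< eta u <> eta' u >] then 1 else 0))%:E = 0)%E.

Definition cutoff {R : realType} (eta : R -> R) : Prop :=
  exists2 x : R, x \in `[0%R : R, 1%R] &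
    forall u, u \in `[0%R : R, 1%R] -> (u < x -> eta u = 1) /\ (x < u -> eta u = 0).

From HB Require Import structures.
From mathcomp Require Import all_boot all_order all_algebra.
From mathcomp Require Import all_classical all_reals all_analysis.
From mathcomp Require Import measurable_realfun ring.
Import Order.TTheory GRing.Theory Num.Theory.
Local Open Scope classical_set_scope.
Local Open Scope ring_scope.

(* A generalized strategy eta is equivalent to, or strictly dominated by, the
   cutoff strategy that sends the same mass of types to L.

   Write t_x for the cutoff strategy with threshold x and E[h] for the
   expectation of h(u) over player 1's type u, of density f.  Against an
   opponent strategy eta' only q = int eta' dG matters, and player 1's payoff
   is E[e(u) (q - u) + (1 - q) u] (payoff_mix).  By the intermediate value
   theorem applied to the distribution function of the types there is an x
   with E[t_x] = E[eta] (cutoff_with_mass).  For every opponent the payoff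
   of t_x then exceeds that of eta by E[(t_x - eta)(u) (x - u)] (payoff_shift),
   a quantity independent of eta' and with nonnegative integrand
   (cutoff_gain_ge0).  If it is positive, t_x strictly dominates eta; if it is
   zero, f (t_x - eta) vanishes almost everywhere, so eta and t_x are
   equivalent (equiv_of_null_gain). *)

Section CutoffDominance.
Context {R : realType}.
Local Notation I := (`[0%R : R, 1%R]%classic).
Local Notation leb := (@lebesgue_measure R).

(* [0,1] is measurable for both measurable structures on R in use: the one of
   R itself, on which G and measurability of strategies are stated, and the one
   of measurableTypeR R, on which lebesgue_measure is defined. *)
Let mI : measurable I. Proof. exact: measurable_itv. Qed.
Let mIleb : @measurable _ (measurableTypeR R) I. Proof. exact: measurable_itv. Qed.

Let ae_leb_filter : Filter (nbhs (almost_everywhere leb)).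
Proof. exact: ae_filter_ringOfSetsType. Qed.
#[local] Existing Instance ae_leb_filter.

Lemma unit_itvP (u : R) : I u -> 0 <= u <= 1.
Proof. by rewrite /= in_itv. Qed.

Lemma gen_strategy_01 {e : R -> R} {u : R} : gen_strategy e -> I u -> 0 <= e u <= 1.
Proof. by move=> [_ e01]; exact: e01. Qed.

Lemma gen_strategy_norm {e : R -> R} {u : R} : gen_strategy e -> I u -> `|e u| <= 1.
Proof. by move=> ge Iu; have /andP[e0 e1] := gen_strategy_01 ge Iu; rewrite ger0_norm. Qed.

Lemma bounded_on_le {D : set R} {h : R -> R} {B : R} :
  (forall u, D u -> `|h u| <= B) -> [bounded h u | u in D].
Proof.
move=> hB; exists B; split; first exact: num_real.
by move=> M BM u Du; exact: le_trans (hB u Du) (ltW BM).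
Qed.

Definition bounded_measurable (h : R -> R) : Prop :=
  measurable_fun I h /\ exists B : R, forall u, I u -> `|h u| <= B.

Lemma bm_cst (c : R) : bounded_measurable (fun _ => c).
Proof. by split; [exact: measurable_cst | exists `|c|]. Qed.

Lemma bm_id : bounded_measurable (fun u => u).
Proof.
split; first exact: measurable_id.
by exists 1 => u /unit_itvP /andP[u0 u1]; rewrite ger0_norm.
Qed.

Lemma bm_strategy {e : R -> R} : gen_strategy e -> bounded_measurable e.
Proof. by move=> ge; split; [case: ge | exists 1 => u; exact: gen_strategy_norm]. Qed.

Lemma bmD {h1 h2 : R -> R} : bounded_measurable h1 -> bounded_measurable h2 ->
  bounded_measurable (fun u => h1 u + h2 u).
Proof.
move=> [m1 [B1 hB1]] [m2 [B2 hB2]]; split; first exact: measurable_funD.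
exists (B1 + B2) => u Iu; exact: le_trans (ler_normD _ _) (lerD (hB1 u Iu) (hB2 u Iu)).
Qed.

Lemma bmB {h1 h2 : R -> R} : bounded_measurable h1 -> bounded_measurable h2 ->
  bounded_measurable (fun u => h1 u - h2 u).
Proof.
move=> [m1 [B1 hB1]] [m2 [B2 hB2]]; split; first exact: measurable_funB.
exists (B1 + B2) => u Iu; exact: le_trans (ler_normB _ _) (lerD (hB1 u Iu) (hB2 u Iu)).
Qed.

Lemma bmM {h1 h2 : R -> R} : bounded_measurable h1 -> bounded_measurable h2 ->
  bounded_measurable (fun u => h1 u * h2 u).
Proof.
move=> [m1 [B1 hB1]] [m2 [B2 hB2]]; split; first exact: measurable_funM.
by exists (B1 * B2) => u Iu; rewrite normrM ler_pM // (hB1, hB2).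
Qed.

Local Ltac bounded_measurable_tac :=
  repeat first [ assumption | apply: bm_cst | apply: bm_id
               | apply: bmB | apply: bmD | apply: bmM ].

Lemma measurable_disagreement {g1 g2 : R -> R} :
  measurable_fun I g1 -> measurable_fun I g2 ->
  measurable_fun I (fun u => if `[< g1 u <> g2 u >] then 1 else 0 : R).
Proof.
move=> m1 m2.
rewrite (_ : (fun u => _) = \1_(~` [set 0]) \o (fun u => g1 u - g2 u)).
  apply: measurableT_comp; last exact: measurable_funB.
  by apply: measurable_indic; apply: measurableC; exact: measurable_set1.
apply/funext => u /=; rewrite indicE; case: asboolP => [neq|/contrapT ->].
  by rewrite mem_set //= => /eqP; rewrite subr_eq0 => /eqP.
by rewrite subrr memNset //= => /(_ erefl).
Qed.

Definition cutoff_at (x : R) : R -> R := fun u => if u <= x then 1 else 0.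

Lemma cutoff_at_gen_strategy (x : R) : gen_strategy (cutoff_at x).
Proof.
split; last by move=> u _; rewrite /cutoff_at; case: ifP => _; rewrite ?ler01 ?lexx.
rewrite (_ : cutoff_at x = \1_(`]-oo, x]%classic)).
  by apply: measurable_indic; exact: measurable_itv.
apply/funext => u; rewrite /cutoff_at indicE; case: ifPn => ux.
  by rewrite mem_set //= in_itv /=.
by rewrite memNset //= in_itv /= (negbTE ux).
Qed.

Lemma cutoff_at_cutoff (x : R) : x \in `[0%R : R, 1%R] -> cutoff (cutoff_at x).
Proof.
move=> x01; exists x => // u _; rewrite /cutoff_at; split => ux.
  by rewrite (ltW ux).
by rewrite leNgt ux.
Qed.

Section Opponent.
Context {G : {measure set R -> \bar R}}.
Hypothesis G_01 : G I = 1%E.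

(* An opponent's strategy eta' acts on player 1 only through the probability
   q = int eta' dG that the opponent plays L: affine integrands in eta'
   integrate to the same affine expression in q. *)
Lemma opponent_mix {e' : R -> R} : gen_strategy e' ->
  exists q : R, forall c1 c2 : R,
    (\int[G]_(v in I) (c1 * e' v + c2)%:E = (c1 * q + c2)%:E)%E.
Proof.
move=> [me' e'01]; have Gfin : (G I < +oo)%E by rewrite G_01 ltry.
have ie' : G.-integrable I (EFin \o e').
  apply: measurable_bounded_integrable => //.
  by apply: bounded_on_le => v Iv; exact: gen_strategy_norm.
have ic2 c2 : G.-integrable I (EFin \o cst c2).
  exact: measurable_bounded_integrable (bounded_cst _ _).
exists (fine (\int[G]_(v in I) (e' v)%:E)%E) => c1 c2.
have ic1 : G.-integrable I (EFin \o (fun v => c1 * e' v)).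
  rewrite (_ : EFin \o _ = (fun v => c1%:E * (EFin \o e') v))%E; last first.
    by apply/funext => v /=; rewrite EFinM.
  exact: integrableZl.
rewrite (_ : (fun v => (c1 * e' v + c2)%:E) =
   (EFin \o (fun v => c1 * e' v)%R) \+ (EFin \o cst c2))%E; last first.
  by apply/funext => v /=; rewrite EFinD.
rewrite integralD_EFin //=; under eq_integral do rewrite EFinM.
rewrite integralZl // integral_cst // G_01 mule1 EFinD EFinM fineK //.
by have := integrable_fin_num mI ie'.
Qed.

(* Hence player 1's payoff against eta' is the f-weighted integral of
   e(u) (q - u) + (1 - q) u: type u gains q - u from each unit of
   probability moved from R to L. *)
Lemma payoff_mix (f : R -> R) {e' : R -> R} : gen_strategy e' ->
  exists q : R, forall e : R -> R, payoff f G e e' =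
    (\int[leb]_(u in I) (f u * (e u * (q - u) + (1 - q) * u))%:E)%E.
Proof.
move=> /opponent_mix[q hq]; exists q => e; apply: eq_integral => u _.
rewrite (_ : (fun v => (e u * e' v * (1 - u) + (1 - e u) * (1 - e' v) * u)%:E) =
   (fun v => ((e u * (1 - u) - (1 - e u) * u) * e' v + (1 - e u) * u)%:E)); last first.
  by apply/funext => v; congr (_%:E); ring.
by rewrite hq -EFinM; congr (_%:E); ring.
Qed.

End Opponent.

Section TypeExpectation.
Variable f : R -> R.
Hypothesis f_meas : measurable_fun I f.
Hypothesis f_ge0 : forall u, u \in `[0%R : R, 1%R] -> 0 <= f u.
Hypothesis f_int1 : (\int[leb]_(u in I) (f u)%:E = 1)%E.

Definition typeE (h : R -> R) : \bar R := (\int[leb]_(u in I) (f u * h u)%:E)%E.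

Lemma density_integrable : leb.-integrable I (EFin \o f).
Proof.
apply/integrableP; split; first exact/measurable_EFinP.
rewrite (_ : (\int[leb]_(u in I) `|(EFin \o f) u| = \int[leb]_(u in I) (f u)%:E)%E).
  by rewrite f_int1 ltry.
by apply: eq_integral => u /set_mem Iu /=; rewrite ger0_norm // f_ge0.
Qed.

Lemma typeE_integrable {h : R -> R} : bounded_measurable h ->
  leb.-integrable I (fun u => (f u * h u)%:E).
Proof.
move=> [mh [B hB]].
have := @integrableMl _ (measurableTypeR R) R leb I mIleb _ h density_integrable mh
  (bounded_on_le hB).
by apply: eq_integrable => // u _ /=; rewrite EFinM.
Qed.

Lemma typeE_fin_num {h : R -> R} : bounded_measurable h -> typeE h \is a fin_num.
Proof. by move=> bh; exact: (@integrable_fin_num _ _ _ leb I mIleb _ (typeE_integrable bh)). Qed.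

Lemma typeED {h1 h2 : R -> R} : bounded_measurable h1 -> bounded_measurable h2 ->
  typeE (fun u => h1 u + h2 u) = (typeE h1 + typeE h2)%E.
Proof.
move=> b1 b2; rewrite /typeE -integralD //; try exact: typeE_integrable.
by apply: eq_integral => u _; rewrite mulrDr EFinD.
Qed.

Lemma typeE_scaled_diff {h1 h2 : R -> R} (c : R) :
  bounded_measurable h1 -> bounded_measurable h2 -> typeE h1 = typeE h2 ->
  typeE (fun u => c * (h2 u - h1 u)) = 0%E.
Proof.
move=> b1 b2 h12; rewrite /typeE.
transitivity (\int[leb]_(u in I) (c%:E * ((f u * h2 u)%:E - (f u * h1 u)%:E)))%E.
  by apply: eq_integral => u _; rewrite -EFinB -EFinM; congr (_%:E); ring.
rewrite integralZl //; last by apply: integrableB => //; exact: typeE_integrable.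
rewrite (integralB_EFin mIleb (typeE_integrable b2) (typeE_integrable b1)).
by rewrite -/(typeE h2) -/(typeE h1) h12 subee ?mule0 // typeE_fin_num.
Qed.

Lemma typeE_ge0 (h : R -> R) : (forall u, I u -> 0 <= h u) -> (0 <= typeE h)%E.
Proof.
by move=> h0; apply: integral_ge0 => u Iu; rewrite lee_fin mulr_ge0 ?f_ge0 ?h0.
Qed.

Lemma typeE_strategy_mass (e : R -> R) : gen_strategy e ->
  exists2 m : R, 0 <= m <= 1 & typeE e = m%:E.
Proof.
move=> ge; have efin := typeE_fin_num (bm_strategy ge).
exists (fine (typeE e)); last by rewrite fineK.
rewrite -lee_fin -[X in _ && X]lee_fin fineK //; apply/andP; split.
  by apply: typeE_ge0 => u Iu; have /andP[] := gen_strategy_01 ge Iu.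
rewrite -f_int1; apply: le_integral => //.
- exact: typeE_integrable (bm_strategy ge).
- exact: density_integrable.
move=> u /set_mem Iu /=; have /andP[e0 e1] := gen_strategy_01 ge Iu.
by rewrite lee_fin ler_piMr // f_ge0.
Qed.

Lemma typeE_cutoff_at (x : R) : x \in `[0%R : R, 1%R] ->
  typeE (cutoff_at x) = (parameterized_integral leb 0 x f)%:E.
Proof.
move=> x01; have /andP[x0 x1] : 0 <= x <= 1 by rewrite in_itv in x01.
transitivity (\int[leb]_(u in I) ((EFin \o f) \_ `]-oo, x]%classic) u)%E.
  apply: eq_integral => u _; rewrite patchE /cutoff_at /=; case: ifPn => ux.
    by rewrite mem_set ?mulr1 //= in_itv /=.
  by rewrite memNset ?mulr0 //= in_itv /= (negbTE ux).
rewrite -integral_mkcondr.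
have -> : I `&` `]-oo, x]%classic = `[0%R, x]%classic.
  apply/seteqP; split => u /=; rewrite !in_itv /=; first by case=> /andP[-> _] ->.
  by case/andP => u0 ux; rewrite u0 ux (le_trans ux x1).
rewrite /parameterized_integral /Rintegral fineK //.
apply: integrable_fin_num; first exact: measurable_itv.
by apply: integrableS density_integrable => //; apply: subset_itvl; rewrite bnd_simp.
Qed.

(* Intermediate value theorem: every mass m in [0,1] is the mass of some
   cutoff strategy. *)
Lemma cutoff_with_mass (m : R) : 0 <= m <= 1 ->
  exists2 x : R, x \in `[0%R : R, 1%R] & typeE (cutoff_at x) = m%:E.
Proof.
move=> m01; pose F x := parameterized_integral leb 0 x f.
have F0 : F 0 = 0 by rewrite /F /parameterized_integral set_itv1 Rintegral_set1.
have F1 : F 1 = 1 by rewrite /F /parameterized_integral /Rintegral f_int1.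
have [x x01 Fx] : exists2 x, x \in `[0%R : R, 1%R] & F x = m.
  apply: IVT => //; first exact: parameterized_integral_continuous density_integrable.
  by rewrite F0 F1 min_l ?ler01 // max_r ?ler01.
by exists x => //; rewrite typeE_cutoff_at // -Fx.
Qed.

Lemma payoff_fin_num {G : {measure set R -> \bar R}} (G_01 : G I = 1%E)
    {e e' : R -> R} :
  gen_strategy e -> gen_strategy e' -> payoff f G e e' \is a fin_num.
Proof.
move=> ge ge'; have [q ->] := payoff_mix G_01 f ge'.
by apply: typeE_fin_num; have be := bm_strategy ge; bounded_measurable_tac.
Qed.

(* Indeed the
   payoff is the expectation of e(u) (q - u) + (1 - q) u, and the part
   (e2 - e1)(u) (q - x) has null expectation. *)
Lemma payoff_shift {G : {measure set R -> \bar R}} (G_01 : G I = 1%E)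
    {e1 e2 e' : R -> R} (x : R) :
  gen_strategy e1 -> gen_strategy e2 -> gen_strategy e' -> typeE e1 = typeE e2 ->
  payoff f G e2 e' = (payoff f G e1 e' + typeE (fun u => (e2 u - e1 u) * (x - u))%R)%E.
Proof.
move=> g1 g2 g' h12; have [q pay] := payoff_mix G_01 f g'.
have b1 := bm_strategy g1; have b2 := bm_strategy g2.
pose pay1 u := e1 u * (q - u) + (1 - q) * u.
pose shift u := (q - x) * (e2 u - e1 u).
pose gain u := (e2 u - e1 u) * (x - u).
have bpay1 : bounded_measurable pay1 by rewrite /pay1; bounded_measurable_tac.
have bshift : bounded_measurable shift by rewrite /shift; bounded_measurable_tac.
have bgain : bounded_measurable gain by rewrite /gain; bounded_measurable_tac.
rewrite !pay -/(typeE pay1) -/(typeE gain).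
transitivity (typeE (fun u => pay1 u + shift u + gain u)).
  by apply: eq_integral => u _; congr (_ * _)%:E; rewrite /pay1 /shift /gain; ring.
rewrite (typeED (bmD bpay1 bshift) bgain) (typeED bpay1 bshift).
by rewrite (typeE_scaled_diff _ b1 b2 h12) adde0.
Qed.

Lemma typeE_eq0_ae {h : R -> R} : measurable_fun I h -> (forall u, I u -> 0 <= h u) ->
  typeE h = 0%E <-> {ae leb, forall u, I u -> f u * h u = 0}.
Proof.
move=> mh h0.
have mfh : measurable_fun I (EFin \o (fun u => f u * h u)).
  by apply/measurable_EFinP; exact: measurable_funM.
have := @ae_eq_integral_abs _ _ _ leb I mIleb _ mfh.
rewrite (_ : (\int[leb]_(u in I) `|(EFin \o (fun u => f u * h u)%R) u| = typeE h)%E).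
  move=> ->; split=> ae0; apply: filterS ae0 => u + Iu => /(_ Iu) /=.
    by case.
  by move=> ->.
apply: eq_integral => u /set_mem Iu /=.
by rewrite ger0_norm // mulr_ge0 ?f_ge0 ?h0.
Qed.

(* The pointwise gain (t_x - e)(u) (x - u) of switching from e to the cutoff
   t_x is nonnegative: t_x plays L with probability 1 on types below x and with
   probability 0 on types above x. *)
Lemma cutoff_gain_ge0 {e : R -> R} (x u : R) : gen_strategy e -> I u ->
  0 <= (cutoff_at x u - e u) * (x - u).
Proof.
move=> ge Iu; have /andP[e0 e1] := gen_strategy_01 ge Iu.
rewrite /cutoff_at; case: ifPn => ux; first by rewrite mulr_ge0 ?subr_ge0.
by rewrite -ltNge in ux; rewrite sub0r mulNr oppr_ge0 mulr_ge0_le0 // subr_le0 ltW.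
Qed.

(* If switching to the cutoff gains nothing in expectation, then e agrees with
   the cutoff almost surely: off the null set {x}, a null gain forces f = 0 or
   e = cutoff. *)
Lemma equiv_of_null_gain (e : R -> R) (x : R) : gen_strategy e ->
  typeE (fun u => (cutoff_at x u - e u) * (x - u)) = 0%E ->
  strat_equiv f e (cutoff_at x).
Proof.
move=> ge gain0; have [me _] := ge; have [mt _] := cutoff_at_gen_strategy x.
have mgain : measurable_fun I (fun u => (cutoff_at x u - e u) * (x - u)).
  by apply: measurable_funM; apply: measurable_funB => //; exact: measurable_id.
have /(typeE_eq0_ae mgain (fun u => cutoff_gain_ge0 x u ge)) fgain0 := gain0.
have not_x : {ae leb, forall u, u <> x}.
  exists [set x]; split; [exact: measurable_set1 | exact: lebesgue_measure_set1 |].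
  by move=> u /contrapT.
apply/(typeE_eq0_ae (measurable_disagreement me mt)).
  by move=> u _; case: ifP => _; rewrite ?ler01 ?lexx.
apply: filterS2 fgain0 not_x => u fg0 ux Iu.
move: (fg0 Iu) => /eqP; rewrite !mulf_eq0 !subr_eq0.
case/orP=> [/eqP -> | /orP[/eqP agree | /eqP xu]]; first by rewrite mul0r.
  by case: asboolP => [neq | _]; [case: (neq (esym agree)) | rewrite mulr0].
by case: (ux (esym xu)).
Qed.

End TypeExpectation.

End CutoffDominance.

Theorem lemmaA1 (R : realType) (f : R -> R) (G : {measure set R -> \bar R})
  (f_meas : measurable_fun `[0%R : R, 1%R]%classic f)
  (f_ge0 : forall u, u \in `[0%R : R, 1%R] -> 0 <= f u)
  (f_int1 : (\int[lebesgue_measure]_(u in `[0%R : R, 1%R]%classic) (f u)%:E = 1)%E)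
  (G_T : G setT = 1%E) (G_01 : G `[0%R : R, 1%R]%classic = 1%E)
  (eta : R -> R) (eta_gs : gen_strategy eta) :
  exists teta : R -> R,
    [/\ gen_strategy teta, cutoff teta &
      strat_equiv f eta teta \/
      (forall eta' : R -> R, gen_strategy eta' ->
         (payoff f G eta eta' < payoff f G teta eta')%E)].
Proof.
have [m m01 mass_eta] := typeE_strategy_mass _ f_meas f_ge0 f_int1 _ eta_gs.
have [x x01 mass_cut] := cutoff_with_mass _ f_meas f_ge0 f_int1 _ m01.
have teta_gs := cutoff_at_gen_strategy x.
exists (cutoff_at x); split => //; first exact: cutoff_at_cutoff.
set gain := typeE f (fun u => (cutoff_at x u - eta u) * (x - u)).
have : (0 <= gain)%E by apply: typeE_ge0 => // u Iu; exact: cutoff_gain_ge0.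
rewrite le_eqVlt => /orP[/eqP gain0 | gain_pos].
  by left; apply: (equiv_of_null_gain _ f_meas f_ge0); rewrite // -gain0.
right => eta' eta'_gs.
rewrite (payoff_shift _ f_meas f_ge0 f_int1 G_01 x eta_gs teta_gs eta'_gs).
  by rewrite lteDl // (payoff_fin_num _ f_meas f_ge0 f_int1 G_01).
by rewrite mass_eta mass_cut.
Qed.
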